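(* The free semigroup of rank 1 with a zero adjoined, $\langle a,b\mid b^2=b,\ ab=ba=b\rangle$, is not isomorphic to any expanding automaton semigroup. Consequently (since the free semigroup of rank 1 is an expanding automaton semigroup), the class of expanding automaton semigroups is not closed under taking normal ideal extensions.
   Context: An expanding automaton is $(Q,\Sigma,t,o)$ with $Q$ a finite set of states, $\Sigma$ a finite alphabet, $t:Q\times\Sigma\to Q$ and $o:Q\times\Sigma\to\Sigma^+$. Each state $q$ induces $q:\Sigma^*\to\Sigma^*$ by $q(\emptyset)=\emptyset$, $q(\sigma w)=o(q,\sigma)\,q'(w)$ with $q'=t(q,\sigma)$; an expanding automaton semigroup is the semigroup of maps generated under composition by the states. For semigroups $S,T$, the normal ideal extension of $S$ by $T$ is the disjoint union $S\sqcup T$ with product $x\cdot y=xy$ if $x,y\in S$ or $x,y\in T$, $x\cdot y=y$ if $x\in S,y\in T$, and $x\cdot y=x$ if $x\in T,y\in S$. *)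

From mathcomp Require Import all_boot.
Set Implicit Arguments. Unset Strict Implicit. Unset Printing Implicit Defensive.

(* An expanding automaton (Q, Sigma, t, o): t : Q -> Sigma -> Q,
   o : Q -> Sigma -> Sigma^+ (nonemptiness is a separate hypothesis). *)

Fixpoint state_map (Q Sigma : Type) (t : Q -> Sigma -> Q)
    (o : Q -> Sigma -> seq Sigma) (q : Q) (w : seq Sigma) : seq Sigma :=
  match w with
  | [::] => [::]
  | s :: w' => o q s ++ state_map t o (t q s) w'
  end.

Inductive generated (Q Sigma : Type) (t : Q -> Sigma -> Q)
    (o : Q -> Sigma -> seq Sigma) : (seq Sigma -> seq Sigma) -> Prop :=
  | gen_state q : generated t o (state_map t o q)
  | gen_comp f g : generated t o f -> generated t o g ->
                   generated t o (g \o f).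

(* (S, op) is isomorphic to an expanding automaton semigroup.
   Convention: the product x y in the automaton semigroup is the map
   "apply x, then y", i.e. phi (x y) = phi y \o phi x. *)
Definition is_EA_semigroup (S : Type) (op : S -> S -> S) : Prop :=
  exists (Q Sigma : finType) (t : Q -> Sigma -> Q)
         (o : Q -> Sigma -> seq Sigma),
    (forall q s, o q s <> [::]) /\
    exists phi : S -> (seq Sigma -> seq Sigma),
      injective phi /\
      (forall f, generated t o f <-> exists x, phi x = f) /\
      (forall x y, phi (op x y) = phi y \o phi x).

(* Free semigroup of rank 1 with a zero adjoined,
   <a, b | b^2 = b, ab = ba = b>:  Some n represents a^(n+1), None is b = 0. *)
Definition free1_zero_mul (x y : option nat) : option nat :=
  match x, y with
  | Some m, Some n => Some (m + n).+1
  | _, _ => None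
  end.

Definition normal_ideal_ext (S T : Type) (opS : S -> S -> S)
    (opT : T -> T -> T) (x y : S + T) : S + T :=
  match x, y with
  | inl a, inl b => inl (opS a b)
  | inr a, inr b => inr (opT a b)
  | inl _, inr b => inr b
  | inr a, inl _ => inr a
  end.

Definition associative_op (S : Type) (op : S -> S -> S) : Prop :=
  forall x y z, op x (op y z) = op (op x y) z.

(* A representation of <a, b | b^2 = b, ab = ba = b> by an expanding automaton
   sends b to a map Z absorbing every other element. Residuals of generated maps
   are generated, and the residuals of a^n are Z or powers a^j with j >= n;
   hence, taking a state realising a^M with M maximal, every residual of
   B = a^(M+1) and of each power B^k is either Z or B^k itself. Since Z B^k = Z
   and expanding maps never shorten words, B^k maps every letter to a word no
   longer than its image under Z. So B^k is determined by finitely many data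
   (the images of the letters and which residuals are Z), two distinct powers of B
   coincide, and the representation is not faithful.
   The same semigroup is the normal ideal extension of the free monogenic semigroup,
   realised by a one-letter doubling automaton, by the trivial semigroup, realised
   by the identity automaton. *)
From mathcomp Require Import all_boot.
From Stdlib Require Import Classical ClassicalEpsilon FunctionalExtensionality.

Set Implicit Arguments. Unset Strict Implicit. Unset Printing Implicit Defensive.

Definition residual (A : Type) (f : seq A -> seq A) (u : seq A) : seq A -> seq A :=
  fun w => drop (size (f u)) (f (u ++ w)).

Definition sequential (A : Type) (f : seq A -> seq A) : Prop :=
  forall u w, f (u ++ w) = f u ++ residual f u w.

Section Residuals.

Variable A : Type.
Implicit Types f g : seq A -> seq A.

Lemma residual_comp f g u : sequential f -> sequential g ->
  residual (g \o f) u = residual g (f u) \o residual f u.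
Proof.
move=> seq_f seq_g; apply: functional_extensionality => w.
by rewrite {1}/residual /= seq_f seq_g drop_size_cat.
Qed.

Lemma sequential_comp f g : sequential f -> sequential g -> sequential (g \o f).
Proof. by move=> seq_f seq_g u w; rewrite residual_comp //= seq_f seq_g. Qed.

Lemma sequential_eq_letters f g :
  sequential f -> sequential g -> f [::] = g [::] ->
  (forall s, f [:: s] = g [:: s]) ->
  (forall s, residual f [:: s] = residual g [:: s] \/
             residual f [:: s] = f /\ residual g [:: s] = g) ->
  f = g.
Proof.
move=> seq_f seq_g fg_nil fg_letter fg_res; apply: functional_extensionality.
elim=> [|s w IH] //; rewrite -cat1s seq_f seq_g fg_letter.
by case: (fg_res s) => [-> | [-> ->]]; rewrite ?IH.
Qed.

End Residuals.

Lemma finType_nat_collision (T : finType) (f : nat -> T) :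
  exists i j, i != j /\ f i = f j.
Proof.
pose g (i : 'I_#|T|.+1) := f i.
have /injectivePn [i [j ne_ij eq_ij]] : ~~ injectiveb g.
  by apply/injectiveP => /leq_card; rewrite card_ord ltnn.
by exists (val i), (val j).
Qed.

(* Once every residual at a letter is Z or the map itself, a map is determined
   by finite data, since its images of letters are bounded by those of Z. *)
Lemma self_similar_family_not_injective (Sigma : finType)
    (Z : seq Sigma -> seq Sigma) (F : nat -> seq Sigma -> seq Sigma) :
  (forall k, sequential (F k)) -> (forall k, F k [::] = [::]) ->
  (forall k s, residual (F k) [:: s] = Z \/ residual (F k) [:: s] = F k) ->
  (forall k s, size (F k [:: s]) <= size (Z [:: s])) ->
  exists i j, i != j /\ F i = F j.
Proof.
move=> seq_F nil_F res_F size_F.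
pose L := \max_s size (Z [:: s]).
have size_L k s : size (F k [:: s]) <= L.
  exact: leq_trans (size_F k s) (@leq_bigmax _ (fun s => size (Z [:: s])) s).
pose data k := [ffun s => (insub_bseq L (F k [:: s]),
  excluded_middle_informative (residual (F k) [:: s] = Z) : bool)].
have [i [j [ne_ij /ffunP eq_data]]] := finType_nat_collision data.
exists i, j; split=> //; apply: sequential_eq_letters; rewrite ?nil_F // => s;
  have := eq_data s; rewrite !ffunE => -[eq_img eq_flag].
  by move: eq_img => /(congr1 val); rewrite !val_insubd !size_L.
move: eq_flag; case: excluded_middle_informative => [Zi|nZi];
  case: excluded_middle_informative => [Zj|nZj] // _; first by left; rewrite Zi Zj.
by right; split; [case: (res_F i s) | case: (res_F j s)].
Qed.

Section Generated.

Variables (Q Sigma : Type) (t : Q -> Sigma -> Q) (o : Q -> Sigma -> seq Sigma).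

Lemma state_map_cat q u w :
  state_map t o q (u ++ w) = state_map t o q u ++ state_map t o (foldl t q u) w.
Proof. by elim: u q => [|s u IH] q //=; rewrite IH catA. Qed.

Lemma residual_state_map q u :
  residual (state_map t o q) u = state_map t o (foldl t q u).
Proof.
by apply: functional_extensionality => w; rewrite /residual state_map_cat drop_size_cat.
Qed.

Lemma generated_sequential f : generated t o f -> sequential f.
Proof.
elim=> [q | g h _ seq_g _ seq_h]; last exact: sequential_comp.
by move=> u w; rewrite residual_state_map state_map_cat.
Qed.

Lemma generated_residual f u : generated t o f -> generated t o (residual f u).
Proof.
move=> gen_f; elim: gen_f u => [q | g h gen_g IHg gen_h IHh] u.
  rewrite residual_state_map; exact: gen_state.
rewrite residual_comp; [exact: gen_comp | exact: generated_sequential..].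
Qed.

Lemma generated_nil f : generated t o f -> f [::] = [::].
Proof. by elim=> [q | g h _ g_nil _ h_nil] //=; rewrite g_nil h_nil. Qed.

Lemma generated_size f : (forall q s, o q s <> [::]) ->
  generated t o f -> forall w, size w <= size (f w).
Proof.
move=> o_nonempty; elim=> [q | g h _ size_g _ size_h] w; last first.
  exact: leq_trans (size_g w) (size_h (g w)).
elim: w q => [|s w IH] q //=; rewrite size_cat -add1n leq_add ?IH //.
by case: (o q s) (o_nonempty q s).
Qed.

End Generated.

Section Free1ZeroRepresentation.

Variables (Q Sigma : finType) (t : Q -> Sigma -> Q) (o : Q -> Sigma -> seq Sigma).
Hypothesis o_nonempty : forall q s, o q s <> [::].
Variable phi : option nat -> seq Sigma -> seq Sigma.
Hypothesis phi_inj : injective phi.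
Hypothesis phi_image : forall f, generated t o f <-> exists x, phi x = f.
Hypothesis phi_morph : forall x y, phi (free1_zero_mul x y) = phi y \o phi x.

Local Notation zero := (phi None).
Local Notation pow n := (phi (Some n)).

Lemma phi_generated x : generated t o (phi x).
Proof. by apply/phi_image; exists x. Qed.

Lemma zero_absorbs_l x : zero \o phi x = zero.
Proof. by rewrite -phi_morph; case: x. Qed.

Lemma zero_absorbs_r x : phi x \o zero = zero.
Proof. by rewrite -phi_morph. Qed.

Lemma pow_comp m n : pow n \o pow m = pow (m + n).+1.
Proof. by rewrite -phi_morph. Qed.

Lemma residual_phi x u : exists y, phi y = residual (phi x) u.
Proof. exact/phi_image/generated_residual/phi_generated. Qed.

Lemma residual_phi_comp x y u :
  residual (phi y \o phi x) u = residual (phi y) (phi x u) \o residual (phi x) u.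
Proof. by apply: residual_comp; apply/generated_sequential/phi_generated. Qed.

Lemma size_le_zero x w : size (phi x w) <= size (zero w).
Proof.
have /= <- := congr1 (fun f => f w) (zero_absorbs_l x).
exact: generated_size o_nonempty (phi_generated None) (phi x w).
Qed.

Lemma residual_pow n u : residual (pow n) u = zero \/
  exists2 j, n <= j & residual (pow n) u = pow j.
Proof.
elim: n => [|n IH].
  have [[j|] <-] := residual_phi (Some 0) u; [by right; exists j | by left].
have -> : pow n.+1 = pow 0 \o pow n by rewrite pow_comp addn0.
rewrite residual_phi_comp.
have [y <-] := residual_phi (Some 0) (pow n u).
case: IH => [-> | [i le_ni ->]]; first by left; rewrite zero_absorbs_r.
case: y => [j|]; last by left; rewrite zero_absorbs_l.
right; exists (i + j).+1; last exact: pow_comp.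
by rewrite ltnS (leq_trans le_ni) ?leq_addr.
Qed.

Lemma exists_nonzero_state : exists q n, state_map t o q = pow n.
Proof.
apply: NNPP => no_pow.
suff all_zero f : generated t o f -> f = zero.
  by have /phi_inj := all_zero _ (phi_generated (Some 0)).
elim=> [q | g h _ -> _ ->]; last exact: zero_absorbs_l.
have [[n|] //] := (phi_image _).1 (gen_state t o q) => pow_q.
by case: no_pow; exists q, n.
Qed.

Lemma exists_max_state : exists qm M, state_map t o qm = pow M /\
  forall q m, state_map t o q = pow m -> m <= M.
Proof.
have [q0 [n0 q0_pow]] := exists_nonzero_state.
have pre q : {x | phi x = state_map t o q}.
  by apply: constructive_indefinite_description; apply/phi_image/gen_state.
have pre_pow q m : state_map t o q = pow m -> sval (pre q) = Some m.
  by move=> q_pow; apply: phi_inj; rewrite (svalP (pre q)).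
pose exponent q := if sval (pre q) is Some n then n else 0.
have [|qm] := @arg_maxnP _ q0 (fun q => sval (pre q) != None) exponent.
  by rewrite (pre_pow _ _ q0_pow).
rewrite /exponent; case pre_qm: (sval (pre qm)) => [M|] // _ max_qm.
exists qm, M; split; first by rewrite -pre_qm (svalP (pre qm)).
by move=> q m /pre_pow pre_q; have := max_qm q; rewrite pre_q; apply.
Qed.

Section MaximalState.

Variables (qm : Q) (M : nat).
Hypothesis qm_pow : state_map t o qm = pow M.
Hypothesis qm_max : forall q m, state_map t o q = pow m -> m <= M.

Lemma residual_max_pow u : residual (pow M) u = zero \/ residual (pow M) u = pow M.
Proof.
case: (residual_pow M u) => [|[j le_Mj res_j]]; [by left | right].
have le_jM : j <= M.
  by apply: (@qm_max (foldl t qm u)); rewrite -residual_state_map qm_pow.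
by rewrite res_j (@anti_leq j M) ?le_jM.
Qed.

Lemma residual_max_pow_iter k u :
  let B := pow (k * M.+1 + M) in residual B u = zero \/ residual B u = B.
Proof.
elim: k u => [|k IH] u; first exact: residual_max_pow.
have -> : k.+1 * M.+1 + M = (k * M.+1 + M + M).+1.
  by rewrite mulSn !addSn [M + _]addnC.
rewrite /= -pow_comp residual_phi_comp.
case: (IH u) => /= ->.
  have [y <-] := residual_phi (Some M) (pow (k * M.+1 + M) u).
  by left; rewrite zero_absorbs_r.
case: (residual_max_pow (pow (k * M.+1 + M) u)) => ->; last by right.
by left; rewrite zero_absorbs_l.
Qed.

End MaximalState.

Lemma no_free1_zero_representation : False.
Proof.
have [qm [M [qm_pow qm_max]]] := exists_max_state.
have [i [j [ne_ij eq_pow]]] : exists i j, i != j /\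
    pow (i * M.+1 + M) = pow (j * M.+1 + M).
  apply: (@self_similar_family_not_injective _ zero).
  - by move=> k; apply/generated_sequential/phi_generated.
  - by move=> k; apply/generated_nil/phi_generated.
  - by move=> k s; apply: residual_max_pow_iter qm_pow qm_max k [:: s].
  - by move=> k s; apply: size_le_zero.
move/phi_inj: eq_pow => [] /eqP; rewrite eqn_add2r eqn_pmul2r //.
exact/negP.
Qed.

End Free1ZeroRepresentation.

Lemma free1_zero_not_EA : ~ is_EA_semigroup free1_zero_mul.
Proof.
move=> [Q [Sigma [t [o [o_nonempty [phi [phi_inj [phi_image phi_morph]]]]]]]].
exact: (no_free1_zero_representation o_nonempty phi_inj phi_image phi_morph).
Qed.

Lemma is_EA_semigroup_iso (S S' : Type) (opS : S -> S -> S) (opS' : S' -> S' -> S')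
    (h : S' -> S) (h' : S -> S') :
  cancel h h' -> cancel h' h -> (forall x y, h (opS' x y) = opS (h x) (h y)) ->
  is_EA_semigroup opS -> is_EA_semigroup opS'.
Proof.
move=> hK h'K h_morph [Q [Sigma [t [o [o_nonempty [phi [phi_inj phi_EA]]]]]]].
have [phi_image phi_morph] := phi_EA.
exists Q, Sigma, t, o; split=> //; exists (phi \o h); split.
  exact: inj_comp phi_inj (can_inj hK).
split=> [f | x y]; last by rewrite /= h_morph phi_morph.
rewrite phi_image; split=> -[x <-]; last by exists (h x).
by exists (h' x); rewrite /= h'K.
Qed.

(* As in [free1_zero_mul], [n] stands for a^(n+1). *)
Definition free1_mul (m n : nat) : nat := (m + n).+1.

Definition trivial_mul (x y : unit) : unit := tt.

Definition unit_trans (q s : unit) : unit := tt.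

Definition doubling_out (q s : unit) : seq unit := [:: tt; tt].

Definition free1_action (n : nat) (w : seq unit) : seq unit :=
  nseq (2 ^ n.+1 * size w) tt.

Lemma state_map_doubling : state_map unit_trans doubling_out tt = free1_action 0.
Proof.
apply: functional_extensionality; elim=> [|s w IH] //=.
by rewrite IH /free1_action expn1 mulnS.
Qed.

Lemma free1_action_comp m n :
  free1_action n \o free1_action m = free1_action (free1_mul m n).
Proof.
apply: functional_extensionality => w.
by rewrite /free1_action /free1_mul /= size_nseq mulnA -expnD addSn addnS addnC.
Qed.

Lemma free1_EA : is_EA_semigroup free1_mul.
Proof.
exists unit, unit, unit_trans, doubling_out; split=> //; exists free1_action; split.
  move=> m n /(congr1 (fun f => size (f [:: tt]))).
  by rewrite !size_nseq !muln1 => /(expnI (isT : 1 < 2)) [].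
split=> [f | x y]; last by rewrite free1_action_comp.
split=> [|[n <-]].
  elim=> [[] | g h _ [m <-] _ [n <-]]; first by exists 0; rewrite state_map_doubling.
  by exists (free1_mul m n); rewrite free1_action_comp.
elim: n => [|n IH]; first by rewrite -state_map_doubling; exact: gen_state.
have -> : free1_action n.+1 = free1_action 0 \o free1_action n.
  by rewrite free1_action_comp /free1_mul addn0.
by apply: gen_comp; rewrite // -state_map_doubling; exact: gen_state.
Qed.

Definition copy_out (q s : unit) : seq unit := [:: s].

Lemma state_map_copy : state_map unit_trans copy_out tt = id.
Proof. by apply: functional_extensionality; elim=> [|s w IH] //=; rewrite IH. Qed.

Lemma trivial_EA : is_EA_semigroup trivial_mul.
Proof.
exists unit, unit, unit_trans, copy_out; split=> //; exists (fun=> id); split.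
  by move=> [] [].
split=> [f | x y] //; split=> [|[x <-]].
  by elim=> [[] | g h _ [x <-] _ [y <-]]; exists tt; rewrite ?state_map_copy.
by rewrite -state_map_copy; exact: gen_state.
Qed.

Lemma free1_ext_trivial_not_EA :
  ~ is_EA_semigroup (normal_ideal_ext free1_mul trivial_mul).
Proof.
move=> ext_EA; apply: free1_zero_not_EA.
apply: (@is_EA_semigroup_iso _ _ _ free1_zero_mul
  (fun x => if x is Some n then inl n else inr tt)
  (fun y => if y is inl n then Some n else None)) ext_EA.
- by case.
- by case=> [n|[]].
- by case=> [m|] [n|].
Qed.

Theorem mainTheorem15 :
  (~ is_EA_semigroup free1_zero_mul) /\
  (exists (S T : Type) (opS : S -> S -> S) (opT : T -> T -> T),
      associative_op opS /\ associative_op opT /\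
      is_EA_semigroup opS /\ is_EA_semigroup opT /\
      ~ is_EA_semigroup (normal_ideal_ext opS opT)).
Proof.
split; first exact: free1_zero_not_EA.
exists nat, unit, free1_mul, trivial_mul.
split; first by move=> x y z; rewrite /free1_mul addnS addSn addnA.
split; first by [].
split; first exact: free1_EA.
split; first exact: trivial_EA.
exact: free1_ext_trivial_not_EA.
Qed.
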